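(* Let $h\ge 4$ be an integer and let $\hat e(h,4)=4/3$ if $h\equiv 1\pmod 3$, $\hat e(h,4)=1$ if $h\equiv 0\pmod 3$, and $\hat e(h,4)=2/3$ if $h\equiv 2 \pmod 3$. Then there exists $W\in\mathcal W^2_{h\times 4}$ with $e(W)=\hat e(h,4)$, i.e. $|W|_\blacksquare = 8h/3+\hat e(h,4)$. Moreover, if $h>4$, such a $W$ can be chosen to be a snake.
   Context: A 2-dimensional binary word of dimensions $h\times w$ is an $h\times w$ matrix $W$ with entries in $\{\square,\blacksquare\}$; entries $\blacksquare$ are filled cells, entries $\square$ empty cells, and $|W|_\blacksquare$ is the number of filled cells. Two cells $(i,j),(i',j')$ are adjacent if $|i-i'|+|j-j'|=1$; the degree of a filled cell is the number of filled cells adjacent to it. $\mathcal W^2_{h\times w}$ is the set of $h\times w$ binary words in which every filled cell has degree at most $2$. The excess of an $a\times b$ word $U$ is $e(U)=|U|_\blacksquare-2ab/3$. A word $W$ is a snake if its set of filled cells is nonempty and the graph whose vertices are the filled cells, with edges between adjacent filled cells, is a path. *)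

From mathcomp Require Import all_boot all_order all_algebra.
Set Implicit Arguments. Unset Strict Implicit. Unset Printing Implicit Defensive.
Import Order.TTheory GRing.Theory Num.Theory.

Definition cell (h w : nat) := ('I_h * 'I_w)%type.

(* A 2-dimensional binary word: true = filled cell, false = empty cell. *)
Definition bword (h w : nat) := {ffun cell h w -> bool}.

Definition absdiff (n m : nat) : nat := (n - m) + (m - n).

Definition adj (h w : nat) (c c' : cell h w) : bool :=
  absdiff c.1 c'.1 + absdiff c.2 c'.2 == 1.

Definition filled (h w : nat) (W : bword h w) : {set cell h w} := [set c | W c].
Definition nfilled (h w : nat) (W : bword h w) : nat := #|filled W|.

Definition degree (h w : nat) (W : bword h w) (c : cell h w) : nat :=
  #|[set c' | W c' & adj c c']|.

Definition in_W2 (h w : nat) (W : bword h w) : bool :=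
  [forall c, W c ==> (degree W c <= 2)].

Definition excess (h w : nat) (W : bword h w) : rat :=
  ((nfilled W)%:R - (2 * h * w)%:R / 3%:R)%R.

(* The graph on filled cells (edges = adjacency) is a path graph:
   there is an enumeration s of the filled cells without repetition,
   nonempty, such that two filled cells are adjacent iff they are
   consecutive in s. *)
Definition is_snake (h w : nat) (W : bword h w) : Prop :=
  exists s : seq (cell h w),
    [/\ s != [::], uniq s, s =i filled W &
        forall (c0 : cell h w) (i j : nat), i < size s -> j < size s ->
          adj (nth c0 s i) (nth c0 s j) = ((i.+1 == j) || (j.+1 == i))].

Definition ehat4 (h : nat) : rat :=
  if h %% 3 == 1 then (4%:R / 3%:R)%R
  else if h %% 3 == 0 then 1%R
  else (2%:R / 3%:R)%R.

From mathcomp Require Import all_boot all_order all_algebra.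
From mathcomp Require Import zify.
Import Order.TTheory GRing.Theory Num.Theory.

Set Implicit Arguments.
Unset Strict Implicit.
Unset Printing Implicit Defensive.

(* The snakes are grown six rows at a time.  Call a path [s] in a box of width 4
   wrappable if it runs from the corner (0,0) to the corner (0,3) and avoids (0,2).
   Such a path can be capped: shifted up by T+1 rows and joined to a path [tl] ending
   at (T,0) and a path [tr] starting at (T,3), both lying in rows 0..T.  Capping with
   two walls of 8 cells each (T = 5) gives again a wrappable path, with 6 more rows and
   16 more cells, i.e. at density exactly 2/3.  Starting from wrappable paths of
   heights 2 and 5 (excess 2/3) and closing with no cap, a cap of height 1 (excess
   +1/3) or a cap of height 5 (excess +2/3), every height h > 4 is reached with excess
   ehat4 h.  For h = 4 a cycle of 12 cells has excess 4/3. *)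

Notation point := (nat * nat)%type.

Definition grid_adj (p q : point) : bool := absdiff p.1 q.1 + absdiff p.2 q.2 == 1.

Lemma grid_adjC p q : grid_adj p q = grid_adj q p.
Proof. by rewrite /grid_adj /absdiff; apply/eqP/eqP; lia. Qed.

Definition induced_path (s : seq point) : bool :=
  uniq s && all (fun i => all (fun j =>
    grid_adj (nth (0,0) s i) (nth (0,0) s j) == (i.+1 == j) || (j.+1 == i))
      (iota 0 (size s))) (iota 0 (size s)).

Lemma induced_pathP s :
  reflect (uniq s /\ forall i j, i < size s -> j < size s ->
             grid_adj (nth (0,0) s i) (nth (0,0) s j) = (i.+1 == j) || (j.+1 == i))
          (induced_path s).
Proof.
apply: (iffP idP) => [/andP[u /allP adjs]|[u adjs]]; first split=> //.
  move=> i j ilt jlt; have i_in : i \in iota 0 (size s) by rewrite mem_iota.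
  have /allP adj_i := adjs i i_in.
  by move: (adj_i j); rewrite mem_iota jlt => /(_ isT)/eqP.
apply/andP; split=> //; apply/allP=> i; rewrite mem_iota add0n => ilt; apply/allP=> j.
by rewrite mem_iota add0n => jlt; rewrite adjs.
Qed.

Lemma induced_path_uniq s : induced_path s -> uniq s.
Proof. by case/andP. Qed.

Lemma induced_path_deg s x : induced_path s -> x \in s -> count (grid_adj x) s <= 2.
Proof.
move=> /induced_pathP[u adjs] xs; set i := index x s.
have ilt : i < size s by rewrite index_mem.
have ex : nth (0,0) s i = x by rewrite nth_index.
rewrite -size_filter.
apply: (leq_trans (uniq_leq_size (s2 := [:: nth (0,0) s i.-1; nth (0,0) s i.+1])
                                 (filter_uniq _ u) _)) => // y.
rewrite mem_filter => /andP[xy ys].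
have jlt : index y s < size s by rewrite index_mem.
have ey : nth (0,0) s (index y s) = y by rewrite nth_index.
move: xy; rewrite -ex -{1}ey adjs // => /orP[/eqP e|/eqP e].
  by rewrite !inE -ey -e eqxx orbT.
by rewrite !inE -ey -e /= eqxx.
Qed.

Definition shift_rows (k : nat) (s : seq point) : seq point :=
  map (fun p => (p.1 + k, p.2)) s.

Lemma mem_shift_rows k s x :
  x \in shift_rows k s -> exists2 y, y \in s & x = (y.1 + k, y.2).
Proof. by case/mapP=> y ys ->; exists y. Qed.

Lemma last_shift_rows k s : s != [::] ->
  last (0,0) (shift_rows k s) = ((last (0,0) s).1 + k, (last (0,0) s).2).
Proof. by case: s => // a s _ /=; rewrite last_map. Qed.

Lemma induced_path_shift_rows k s : induced_path s -> induced_path (shift_rows k s).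
Proof.
move=> /induced_pathP[u adjs]; apply/induced_pathP; split.
  rewrite map_inj_uniq // => [[a b] [c d]] /= [ac ->]; congr (_, _); lia.
move=> i j; rewrite size_map => ilt jlt; rewrite !(nth_map (0,0)) // -adjs //.
by rewrite /grid_adj /absdiff /= !subnDr.
Qed.

Lemma induced_path_cat s1 s2 :
  induced_path s1 -> induced_path s2 -> s1 != [::] -> s2 != [::] ->
  grid_adj (last (0,0) s1) (head (0,0) s2) ->
  {in s1 & s2, forall x y,
     (x != y) && (grid_adj x y ==> (x == last (0,0) s1) && (y == head (0,0) s2))} ->
  induced_path (s1 ++ s2).
Proof.
move=> /induced_pathP[u1 adjs1] /induced_pathP[u2 adjs2] ne1 ne2 junction cross.
have n1_gt0 : 0 < size s1 by rewrite lt0n size_eq0.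
have n2_gt0 : 0 < size s2 by rewrite lt0n size_eq0.
apply/induced_pathP; split.
  rewrite cat_uniq u1 u2 /= andbT; apply/hasPn => y ys; apply/negP => xs.
  by have /andP[/eqP] := cross y y xs ys.
have across i j : i < size s1 -> size s1 <= j < size s1 + size s2 ->
    grid_adj (nth (0,0) s1 i) (nth (0,0) s2 (j - size s1)) = (i.+1 == j) || (j.+1 == i).
  move=> ilt /andP[jge jlt]; have jlt' : j - size s1 < size s2 by lia.
  case E: (grid_adj _ _).
    have /andP[_ /implyP/(_ E)/andP[ex ey]] := cross _ _ (mem_nth (0,0) ilt) (mem_nth (0,0) jlt').
    move: ex; rewrite -nth_last nth_uniq //; last by rewrite ltn_predL.
    move: ey; rewrite -nth0 nth_uniq // => /eqP ey /eqP ex.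
    have {}ex : i.+1 = size s1 by rewrite ex prednK.
    symmetry; lia.
  symmetry; apply/negbTE/negP => /orP[hij|hji]; last lia.
  have ei : i = (size s1).-1 by lia.
  have ej : j - size s1 = 0 by lia.
  by move: E; rewrite ei ej nth_last nth0 junction.
move=> i j; rewrite size_cat => ilt jlt; rewrite !nth_cat.
case: (ltnP i (size s1)) => hi; case: (ltnP j (size s1)) => hj.
- exact: adjs1.
- by apply: across => //; rewrite hj.
- by rewrite grid_adjC (across j i hj) 1?orbC // hi.
- rewrite adjs2 ?ltn_subLR //.
  by congr (_ || _); apply/eqP/eqP; lia.
Qed.

Definition in_box (H : nat) (p : point) : bool := (p.1 < H) && (p.2 < 4).

(* (0,2) must stay empty: the cell below it may belong to the cap (see [cap_cell]). *)
Definition wrappable (s : seq point) (R : nat) : bool :=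
  [&& induced_path s, head (0,0) s == (0,0), last (0,0) s == (0,3),
      all (in_box R) s & (0,2) \notin s].

Definition cap_cell (T : nat) (top_cols : seq nat) (x : point) : bool :=
  [&& x.1 <= T, x.2 < 4 & (x.1 == T) ==> (x.2 \in top_cols)].

Lemma cap_cell_junction T c x y : cap_cell T [:: c; 2] x -> y != (0,2) ->
  (x != (y.1 + T.+1, y.2)) &&
  (grid_adj x (y.1 + T.+1, y.2) ==> (x == (T, c)) && ((y.1 + T.+1, y.2) == (T.+1, c))).
Proof.
case: x y => [a b] [d e]; rewrite /cap_cell /grid_adj /absdiff !inE /= !xpair_eqE; lia.
Qed.

Definition cap_ok (tl tr : seq point) (T : nat) : bool :=
  [&& induced_path tl && induced_path tr, (tl != [::]) && (tr != [::]),
      (last (0,0) tl == (T, 0)) && (head (0,0) tr == (T, 3)),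
      all (cap_cell T [:: 0; 2]) tl && all (cap_cell T [:: 3; 2]) tr &
      all (fun x => all (fun z => (x != z) && ~~ grid_adj x z) tr) tl].

Definition cap (tl tr : seq point) (T : nat) (s : seq point) : seq point :=
  tl ++ shift_rows T.+1 s ++ tr.

Lemma grid_adj_succ a b : grid_adj (a, b) (a.+1, b).
Proof. by rewrite /grid_adj /absdiff /=; apply/eqP; lia. Qed.

Lemma size_cap tl tr T s : size (cap tl tr T s) = size tl + size s + size tr.
Proof. by rewrite !size_cat size_map addnA. Qed.

Lemma induced_path_cap tl tr T s R :
  wrappable s R -> cap_ok tl tr T -> induced_path (cap tl tr T s).
Proof.
case/and5P=> ps /eqP hs /eqP ls box s02.
case/and5P=> /andP[ptl ptr] /andP[ntl ntr] /andP[/eqP ltl /eqP htr] /andP[atl atr] /allP sep.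
have ns : s != [::] by case: (s) ls.
have lsh : last (0,0) (shift_rows T.+1 s) = (T.+1, 3) by rewrite last_shift_rows // ls.
have hsh : head (0,0) (shift_rows T.+1 s ++ tr) = (T.+1, 0) by case: (s) hs ns => //= _ ? ->.
have s_neq02 y : y \in s -> y != (0,2) by move=> ys; apply: contraNneq s02 => <-.
have right : induced_path (shift_rows T.+1 s ++ tr).
  apply: induced_path_cat => //; [exact: induced_path_shift_rows | by case: (s) ns | |].
    by rewrite lsh htr grid_adjC grid_adj_succ.
  move=> x z /mem_shift_rows[y /s_neq02 y02 ->] zin.
  rewrite lsh htr eq_sym grid_adjC [X in _ ==> X]andbC.
  exact: cap_cell_junction (allP atr z zin) y02.
apply: induced_path_cat; rewrite ?hsh ?ltl ?grid_adj_succ //; first by case: (s) ns.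
move=> x z xin; rewrite mem_cat => /orP[/mem_shift_rows[y /s_neq02 y02 ->]|zin].
  exact: cap_cell_junction (allP atl x xin) y02.
by have /andP[-> /negbTE ->] := allP (sep x xin) z zin.
Qed.

Lemma cap_in_box tl tr T s R :
  wrappable s R -> cap_ok tl tr T -> all (in_box (T.+1 + R)) (cap tl tr T s).
Proof.
case/and5P=> _ _ _ /allP box _; case/and5P=> _ _ _ /andP[/allP atl /allP atr] _.
rewrite !all_cat; apply/and3P; split; apply/allP.
- by move=> x /atl /and3P[? ? _]; rewrite /in_box; lia.
- by move=> _ /mem_shift_rows[y /box + ->]; rewrite /in_box /=; lia.
- by move=> x /atr /and3P[? ? _]; rewrite /in_box; lia.
Qed.

Definition wall_left : seq point :=
  [:: (0,0); (0,1); (1,1); (2,1); (2,0); (3,0); (4,0); (5,0)].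
Definition wall_right : seq point :=
  [:: (5,3); (5,2); (4,2); (3,2); (3,3); (2,3); (1,3); (0,3)].
Definition wrap (s : seq point) : seq point := cap wall_left wall_right 5 s.

Lemma wrappable_wrap s R : wrappable s R -> wrappable (wrap s) (6 + R).
Proof.
move=> ws; have walls : cap_ok wall_left wall_right 5 by [].
apply/and5P; split=> //.
- exact: induced_path_cap ws walls.
- by rewrite /wrap /cap !last_cat.
- exact: cap_in_box ws walls.
- rewrite /wrap /cap !mem_cat !negb_or; apply/and3P; split=> //.
  by apply/mapP=> -[y _ []]; lia.
Qed.

Lemma wrappable_iter_wrap B R m : wrappable B R -> wrappable (iter m wrap B) (6 * m + R).
Proof. by move=> wB; elim: m => [|m IH] //=; rewrite mulnS -addnA; apply: wrappable_wrap. Qed.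

Lemma size_iter_wrap B m : size (iter m wrap B) = 16 * m + size B.
Proof. by elim: m => // m IH; rewrite iterS /wrap size_cap IH /=; lia. Qed.

Definition cell_point h (c : cell h 4) : point := (val c.1, val c.2).
Arguments cell_point {h}.

Lemma cell_point_inj h : injective (@cell_point h).
Proof. by move=> [a b] [c d] [/val_inj -> /val_inj ->]. Qed.

Lemma cells_of_points h (s : seq point) :
  all (in_box h) s -> exists s' : seq (cell h 4), map cell_point s' = s.
Proof.
elim: s => [|p s IH] /=; first by exists [::].
case/andP=> /andP[p1 p2] /IH[s' <-].
by exists ((Ordinal p1, Ordinal p2) :: s'); case: p p1 p2.
Qed.

Lemma degree_ffun_mem h (s : seq (cell h 4)) c : uniq s ->
  degree [ffun c => c \in s] c = count (grid_adj (cell_point c)) (map cell_point s).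
Proof.
move=> u; rewrite /degree count_map -size_filter.
rewrite -(card_uniqP (filter_uniq (preim cell_point (grid_adj (cell_point c))) u)).
by apply: eq_card => x; rewrite inE ffunE mem_filter andbC.
Qed.

Lemma word_of_points h (s : seq point) :
  uniq s -> all (in_box h) s -> {in s, forall x, count (grid_adj x) s <= 2} ->
  exists W : bword h 4,
    [/\ in_W2 W, nfilled W = size s & induced_path s -> s != [::] -> is_snake W].
Proof.
move=> u box deg; have [s' es] := cells_of_points box.
have u' : uniq s' by rewrite -(map_inj_uniq (@cell_point_inj h)) es.
exists [ffun c => c \in s']; split.
- apply/forallP=> c; apply/implyP; rewrite ffunE => cs'.
  by rewrite degree_ffun_mem // es deg // -es map_f.
- rewrite /nfilled -es size_map -(card_uniqP u').
  by apply: eq_card => x; rewrite /filled inE ffunE.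
- case/induced_pathP=> _ adjs ne; exists s'; split=> //.
  + by move: ne; rewrite -es; case: (s').
  + by move=> x; rewrite /filled inE ffunE.
  + move=> c0 i j ilt jlt; rewrite [adj _ _](_ : _ = grid_adj (cell_point (nth c0 s' i))
                                                   (cell_point (nth c0 s' j))) //.
    by rewrite -!(nth_map c0 (0,0)) // es adjs // -es size_map.
Qed.

Section Excess.
Local Open Scope ring_scope.

Lemma ehat4E h : ehat4 h = (2 + h.+1 %% 3)%:R / 3%:R.
Proof.
rewrite /ehat4; have := ltn_pmod h (isT : (0 < 3)%N).
case E: (h %% 3)%N => [|[|[|//]]] _ /=.
- by rewrite (_ : h.+1 %% 3 = 1)%N ?divff //; lia.
- by rewrite (_ : h.+1 %% 3 = 2)%N //; lia.
- by rewrite (_ : h.+1 %% 3 = 0)%N //; lia.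
Qed.

Lemma excess_ehat4 h (W : bword h 4) :
  (3 * nfilled W = 8 * h + 2 + h.+1 %% 3)%N -> excess W = ehat4 h.
Proof.
move=> count3; rewrite /excess ehat4E; apply: (@mulIf _ 3%:R) => //.
rewrite mulrBl !divfK // -natrM (_ : nfilled W * 3 = 2 * h * 4 + (2 + h.+1 %% 3))%N; last lia.
by rewrite natrD addrAC subrr add0r.
Qed.

End Excess.

Lemma snake_of_induced_path h (s : seq point) :
  induced_path s -> all (in_box h) s -> 3 * size s = 8 * h + 2 + h.+1 %% 3 ->
  exists W : bword h 4, [/\ in_W2 W, excess W = ehat4 h & is_snake W].
Proof.
move=> ps box count3.
have ne : s != [::] by apply/eqP=> s0; move: count3; rewrite s0 /=; lia.
have [W [W2 nW snW]] := word_of_points (induced_path_uniq ps) box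
                          (fun x xs => induced_path_deg ps xs).
by exists W; rewrite excess_ehat4 ?nW //; split=> //; apply: snW.
Qed.

Lemma wrapped_snake h B R m :
  wrappable B R -> 3 * size B = 8 * R + 2 + R.+1 %% 3 -> h = 6 * m + R ->
  exists W : bword h 4, [/\ in_W2 W, excess W = ehat4 h & is_snake W].
Proof.
move=> wB count3 ->; have /and5P[ps _ _ box _] := wrappable_iter_wrap m wB.
by apply: snake_of_induced_path ps box _; rewrite size_iter_wrap; lia.
Qed.

Lemma capped_snake h tl tr T B R m :
  wrappable B R -> cap_ok tl tr T ->
  3 * (size tl + size B + size tr) = 8 * (T.+1 + R) + 2 + (T.+1 + R).+1 %% 3 ->
  h = T.+1 + (6 * m + R) ->
  exists W : bword h 4, [/\ in_W2 W, excess W = ehat4 h & is_snake W].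
Proof.
move=> wB capT count3 ->; have wU := wrappable_iter_wrap m wB.
apply: snake_of_induced_path (induced_path_cap wU capT) (cap_in_box wU capT) _.
by rewrite size_cap size_iter_wrap; lia.
Qed.

Definition base2 : seq point := [:: (0,0); (0,1); (1,1); (1,2); (1,3); (0,3)].
Definition base5 : seq point :=
  [:: (0,0); (0,1); (1,1); (2,1); (2,0); (3,0); (4,0); (4,1); (4,2); (3,2); (3,3);
      (2,3); (1,3); (0,3)].

Definition cap1_left : seq point := [:: (0,0)].
Definition cap1_right : seq point := [:: (0,3); (0,2)].
Definition cap5_left : seq point :=
  [:: (1,0); (0,0); (0,1); (0,2); (0,3); (1,3); (2,3); (2,2); (2,1); (3,1); (3,0); (4,0)].
Definition cap5_right : seq point := [:: (4,3); (4,2)].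

Lemma wrappable_base2 : wrappable base2 2. Proof. by []. Qed.
Lemma wrappable_base5 : wrappable base5 5. Proof. by []. Qed.
Lemma cap1_ok : cap_ok cap1_left cap1_right 0. Proof. by []. Qed.
Lemma cap5_ok : cap_ok cap5_left cap5_right 4. Proof. by []. Qed.

Lemma snake_ehat4 h : 4 < h ->
  exists W : bword h 4, [/\ in_W2 W, excess W = ehat4 h & is_snake W].
Proof.
move=> h_gt4; have := ltn_pmod h (isT : 0 < 6).
case E: (h %% 6) => [|[|[|[|[|[|//]]]]]] _.
- by apply: (capped_snake (m := (h %/ 6).-1) wrappable_base5 cap1_ok) => //; lia.
- by apply: (capped_snake (m := (h %/ 6).-1) wrappable_base2 cap5_ok) => //; lia.
- by apply: (wrapped_snake (m := h %/ 6) wrappable_base2) => //; lia.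
- by apply: (capped_snake (m := h %/ 6) wrappable_base2 cap1_ok) => //; lia.
- by apply: (capped_snake (m := (h %/ 6).-1) wrappable_base5 cap5_ok) => //; lia.
- by apply: (wrapped_snake (m := h %/ 6) wrappable_base5) => //; lia.
Qed.

(* A cycle, not a snake: none is required for h = 4. *)
Definition ring4 : seq point :=
  [:: (0,0); (1,0); (2,0); (2,1); (3,1); (3,2); (3,3); (2,3); (1,3); (0,3); (0,2); (0,1)].

Lemma word_ehat4_4 : exists W : bword 4 4, in_W2 W /\ excess W = ehat4 4.
Proof.
have deg2 : all (fun x => count (grid_adj x) ring4 <= 2) ring4 by [].
have [W [W2 nW _]] := @word_of_points 4 ring4 isT isT (allP deg2).
by exists W; split=> //; apply: excess_ehat4; rewrite nW.
Qed.

Unset Implicit Arguments.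
Local Open Scope ring_scope.

Theorem lemma4 (h : nat) (hh : (4 <= h)%N) :
  (exists W : bword h 4, in_W2 W /\ excess W = ehat4 h) /\
  ((4 < h)%N -> exists W : bword h 4, [/\ in_W2 W, excess W = ehat4 h & is_snake W]).
Proof.
split; last exact: snake_ehat4.
case: (ltnP 4 h) => [/snake_ehat4[W [W2 eW _]]|h_le4]; first by exists W.
have -> : h = 4%N by lia.
exact: word_ehat4_4.
Qed.
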